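(* Consider the system $$\dot x = \vartheta,\qquad \dot\vartheta = -\lambda\vartheta - xu + x - x^3,\qquad \dot u = -\alpha u - \beta x\vartheta,$$ with parameters $\alpha>0$, $\lambda\ge 0$, $\beta>0$ satisfying $$\alpha\big(\sqrt{\lambda^2+4}+\lambda\big) > 2(\beta-2).$$ Let $L>0$ satisfy $L>\frac{\sqrt{\lambda^2+4}-\lambda}{2}$ and $\frac{\beta L}{\alpha+2L}<1$, set $K=\frac{\beta L}{\alpha+2L}$ and $M=1-K$, let $\vartheta_0>0$ be arbitrary, and let $x_0$ be the positive root of the equation $$\vartheta_0^2 + x^2 - \frac{M}{2}x^4 = 0.$$ Suppose that $$\lambda^2 > 4\Big[\Big(1+\frac{\beta}{2}\Big)x_0^2 - 1\Big].$$ Let $(x^+(t),\vartheta^+(t),u^+(t))$ be the positive outgoing separatrix of the zero saddle, i.e. the nontrivial solution with $\lim_{t\to-\infty}(x^+,\vartheta^+,u^+)(t)=(0,0,0)$ and $x^+(t)>0$ for all sufficiently negative $t$. Then $x^+(t)>0$ for all $t\in(-\infty,+\infty)$.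
   Context: The origin $(0,0,0)$ is a saddle equilibrium of the system with a one-dimensional unstable manifold; its positive separatrix is the branch of the unstable manifold along which $x>0$ as $t\to-\infty$. *)

From Stdlib Require Import Reals.
From Coquelicot Require Import Coquelicot.
Open Scope R_scope.

Definition is_solution (alpha lam beta : R) (x th u : R -> R) : Prop :=
  forall t : R,
    is_derive x t (th t) /\
    is_derive th t (- lam * th t - x t * u t + x t - (x t) ^ 3) /\
    is_derive u t (- alpha * u t - beta * x t * th t).

Definition tends_to_origin_at_minus_infty (x th u : R -> R) : Prop :=
  is_lim x m_infty 0 /\ is_lim th m_infty 0 /\ is_lim u m_infty 0.

Definition positive_separatrix (alpha lam beta : R) (x th u : R -> R) : Prop :=
  is_solution alpha lam beta x th u /\
  tends_to_origin_at_minus_infty x th u /\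
  (exists t : R, x t <> 0 \/ th t <> 0 \/ u t <> 0) /\
  (exists t1 : R, forall t : R, t <= t1 -> x t > 0).

(* If x is not positive everywhere, then, being positive near -oo, it has a first zero ts. Integrating linear differential inequalities from
   t = -oo, where the solution tends to 0, gives on (-oo, ts]:
   - L^2 + lam L - 1 + u + x^2 > 0, whence th <= L x, and then u + K x^2 >= 0;
   - x < x0: when x first reaches x0 the energy th^2 - x^2 + (1 - K) x^4 / 2 is at least
     th0^2, yet it is below th0^2 at the start of the last arc with th >= 0 before that
     moment and does not increase along that arc;
   - u + beta x^2 / 2 <= beta x0^2 / 2.
   The last two bounds and the assumption on lam^2 make e^(lam t / 2) (th + lam x / 2)
   nondecreasing on (-oo, ts], so th ts > 0, impossible at a first zero of x. *)

From Stdlib Require Import Reals Lra Psatz Classical.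
From Coquelicot Require Import Coquelicot.
Open Scope R_scope.

Lemma continuous_near (f : R -> R) (c : R) :
  continuous f c -> forall eps, 0 < eps ->
  exists d, 0 < d /\ forall t, Rabs (t - c) < d -> Rabs (f t - f c) < eps.
Proof.
  intros Hf eps Heps. apply continuity_pt_filterlim in Hf.
  destruct (Hf eps Heps) as [d [Hd Hnear]]. exists d. split; [exact Hd |].
  intros t Ht. destruct (Req_dec t c) as [-> | Hne].
  - rewrite Rminus_diag, Rabs_R0. exact Heps.
  - apply (Hnear t). split; [split; [exact I | auto] | exact Ht].
Qed.

Lemma last_zero (f : R -> R) (a b : R) :
  a <= b -> (forall t, a <= t <= b -> continuous f t) -> f a <= 0 -> 0 <= f b ->
  exists c, a <= c <= b /\ f c = 0 /\ forall t, c < t <= b -> 0 < f t.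
Proof.
  intros Hab Hf Ha Hb.
  set (E := fun t => a <= t <= b /\ f t <= 0).
  destruct (completeness E) as [c [Hub Hlub]].
  - exists b. intros t [Ht _]. lra.
  - exists a. split; [lra | exact Ha].
  assert (Hac : a <= c) by (apply Hub; split; [lra | exact Ha]).
  assert (Hcb : c <= b) by (apply Hlub; intros t [Ht _]; lra).
  assert (Hafter : forall t, c < t <= b -> 0 < f t).
  { intros t Ht. apply Rnot_le_lt. intro Hft.
    assert (t <= c) by (apply Hub; split; [lra | exact Hft]). lra. }
  exists c. split; [lra | split; [| exact Hafter]].
  apply Rle_antisym.
  - (* f c <= 0 because points of E accumulate at c from the left *)
    apply Rnot_lt_le. intro Hpos.
    destruct (continuous_near f c (Hf c ltac:(lra)) (f c) Hpos) as [d [Hd Hnear]].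
    assert (Hcd : c <= c - d); [| lra].
    apply Hlub. intros e [He Hfe]. apply Rnot_lt_le. intro Hce.
    assert (e <= c) by (apply Hub; split; auto).
    assert (Habs : Rabs (e - c) < d) by (rewrite Rabs_left1; lra).
    specialize (Hnear e Habs). rewrite Rabs_lt_between in Hnear. lra.
  - destruct (Req_dec c b) as [-> | Hne]; [exact Hb |].
    apply Rnot_lt_le. intro Hneg.
    destruct (continuous_near f c (Hf c ltac:(lra)) (- f c) ltac:(lra)) as [d [Hd Hnear]].
    set (t := Rmin b (c + d / 2)).
    assert (Ht : c < t <= b) by (unfold t; apply Rmin_case_strong; lra).
    assert (Habs : Rabs (t - c) < d)
      by (rewrite Rabs_right; unfold t in *; [apply Rmin_case_strong |]; lra).
    specialize (Hnear t Habs). specialize (Hafter t Ht). rewrite Rabs_lt_between in Hnear. lra.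
Qed.

Lemma first_zero (f : R -> R) (a b : R) :
  a <= b -> (forall t, a <= t <= b -> continuous f t) -> f a <= 0 -> 0 <= f b ->
  exists c, a <= c <= b /\ f c = 0 /\ forall t, a <= t < c -> f t < 0.
Proof.
  intros Hab Hf Ha Hb.
  destruct (last_zero (fun t => - f (- t)) (- b) (- a)) as [c [Hc [Hfc Hafter]]].
  - lra.
  - intros t Ht.
    apply continuity_pt_filterlim, (continuity_pt_opp (fun s => f (- s))).
    apply (continuity_pt_comp Ropp f).
    + apply derivable_continuous_pt, derivable_pt_opp, derivable_pt_id.
    + apply continuity_pt_filterlim, Hf. lra.
  - rewrite Ropp_involutive. lra.
  - rewrite Ropp_involutive. lra.
  - exists (- c). split; [lra | split; [lra |]].
    intros t Ht. specialize (Hafter (- t) ltac:(lra)). rewrite Ropp_involutive in Hafter. lra.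
Qed.

Lemma neg_before_of_no_first_zero (g : R -> R) (T : R) :
  (forall t, t <= T -> continuous g t) ->
  (exists N, forall t, t <= N -> g t < 0) ->
  (forall c, c <= T -> g c = 0 -> (forall t, t < c -> g t < 0) -> False) ->
  forall t, t <= T -> g t < 0.
Proof.
  intros Hg [N HN] Hno t Ht.
  apply Rnot_le_lt. intro Hgt.
  assert (HNt : N < t) by (apply Rnot_le_lt; intro H; specialize (HN t H); lra).
  destruct (first_zero g N t) as [c [Hc [Hgc Hbefore]]].
  - lra.
  - intros s Hs. apply Hg. lra.
  - apply Rlt_le, HN, Rle_refl.
  - exact Hgt.
  - apply (Hno c); [lra | exact Hgc |].
    intros s Hs. destruct (Rle_or_lt s N) as [HsN | HsN]; [exact (HN s HsN) | apply Hbefore; lra].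
Qed.

Lemma nonneg_since_last_zero (f : R -> R) (b : R) :
  (forall t, t <= b -> continuous f t) -> 0 <= f b ->
  (forall t, t <= b -> 0 <= f t) \/
  exists s, s <= b /\ f s = 0 /\ forall t, s <= t <= b -> 0 <= f t.
Proof.
  intros Hf Hb.
  destruct (classic (exists s, s <= b /\ f s < 0)) as [[s [Hs Hfs]] | Hnone].
  - right. destruct (last_zero f s b) as [c [Hc [Hfc Hafter]]].
    + exact Hs.
    + intros t Ht. apply Hf. lra.
    + lra.
    + exact Hb.
    + exists c. split; [lra | split; [exact Hfc |]].
      intros t Ht. destruct (Req_dec t c) as [-> | Hne]; [lra | apply Rlt_le, Hafter; lra].
  - left. intros t Ht. apply Rnot_lt_le. intro Hneg. apply Hnone. exists t. auto.
Qed.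

Lemma derive_nonneg_of_lt_left (f : R -> R) (c d : R) :
  is_derive f c d -> (forall t, t < c -> f t < f c) -> 0 <= d.
Proof.
  intros Hd Hlt. apply is_derive_Reals in Hd.
  apply Rnot_lt_le. intro Hneg.
  destruct (Hd (- d) ltac:(lra)) as [del Hdel]. pose proof (cond_pos del) as Hdel_pos.
  set (h := - (del / 2)).
  assert (Habs : Rabs h < del) by (unfold h; rewrite Rabs_left; lra).
  specialize (Hdel h ltac:(unfold h; lra) Habs). rewrite Rabs_lt_between in Hdel.
  specialize (Hlt (c + h) ltac:(unfold h; lra)).
  assert (Hquot : 0 < (f (c + h) - f c) / h).
  { unfold Rdiv. apply Rmult_neg_neg; [lra | apply Rinv_lt_0_compat; unfold h; lra]. }
  lra.
Qed.

Lemma pos_left_of_derive_neg (f : R -> R) (c d : R) :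
  is_derive f c d -> d < 0 -> 0 <= f c ->
  exists a, a < c /\ forall t, a <= t < c -> 0 < f t.
Proof.
  intros Hd Hneg Hfc. apply is_derive_Reals in Hd.
  destruct (Hd (- d) ltac:(lra)) as [del Hdel]. pose proof (cond_pos del) as Hdel_pos.
  exists (c - del / 2). split; [lra |]. intros t Ht.
  specialize (Hdel (t - c) ltac:(lra) ltac:(rewrite Rabs_left; lra)).
  replace (c + (t - c)) with t in Hdel by ring.
  rewrite Rabs_lt_between in Hdel.
  set (q := (f t - f c) / (t - c)) in Hdel.
  assert (Hq : f t - f c = q * (t - c)) by (unfold q; field; lra).
  nra.
Qed.

Lemma le_of_is_derive_nonneg (g dg : R -> R) (a b : R) :
  a <= b -> (forall t, a <= t <= b -> is_derive g t (dg t)) ->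
  (forall t, a <= t <= b -> 0 <= dg t) -> g a <= g b.
Proof.
  intros Hab Hg Hdg. destruct (Req_dec a b) as [-> | Hne]; [lra |].
  destruct (MVT_cor2 g dg a b) as [c [Hmvt Hc]].
  - lra.
  - intros c Hc. apply is_derive_Reals, Hg, Hc.
  - assert (0 <= dg c) by (apply Hdg; lra). nra.
Qed.

Lemma exp_weighted_le (w q : R -> R) (a s c : R) :
  s <= c ->
  (forall t, s <= t <= c -> is_derive w t (- a * w t + q t)) ->
  (forall t, s <= t <= c -> 0 <= q t) ->
  exp (a * s) * w s <= exp (a * c) * w c.
Proof.
  intros Hsc Hw Hq.
  apply (le_of_is_derive_nonneg (fun t => exp (a * t) * w t) (fun t => exp (a * t) * q t)).
  - exact Hsc.
  - intros t Ht. auto_derive.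
    + exists (- a * w t + q t). apply Hw, Ht.
    + rewrite (is_derive_unique (fun r : R => w r) _ _ (Hw t Ht)). ring.
  - intros t Ht. apply Rmult_le_pos; [apply Rlt_le, exp_pos | apply Hq, Ht].
Qed.

Lemma nonneg_of_nonneg_forcing (w q : R -> R) (a l c : R) :
  0 <= a -> 0 <= l -> is_lim w m_infty l ->
  (forall t, t <= c -> is_derive w t (- a * w t + q t)) ->
  (forall t, t <= c -> 0 <= q t) ->
  0 <= w c.
Proof.
  intros Ha Hl Hlim Hw Hq. apply Rnot_lt_le. intro Hneg.
  assert (Hbelow : forall t, t <= c -> w t <= w c).
  { intros t Ht.
    pose proof (exp_weighted_le w q a t c Ht (fun r Hr => Hw r (proj2 Hr))
                  (fun r Hr => Hq r (proj2 Hr))) as Hexp.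
    assert (Hsplit : exp (a * c) = exp (a * t) * exp (a * (c - t)))
      by (rewrite <- exp_plus; f_equal; ring).
    pose proof (exp_pos (a * t)) as Hpos.
    assert (Hge1 : 1 <= exp (a * (c - t))).
    { pose proof (exp_ineq1_le (a * (c - t))). assert (0 <= a * (c - t)) by nra. lra. }
    assert (Hshrink : exp (a * (c - t)) * w c <= w c) by nra.
    rewrite Hsplit, Rmult_assoc in Hexp.
    apply (Rmult_le_reg_l (exp (a * t))); [exact Hpos |].
    apply (Rle_trans _ _ _ Hexp), Rmult_le_compat_l; lra. }
  assert (Hle : Rbar_le l (w c)).
  { apply (is_lim_le_loc w (fun _ => w c) m_infty); [| exact Hlim | apply is_lim_const].
    exists c. intros t Ht. apply Hbelow. lra. }
  simpl in Hle. lra.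
Qed.

Lemma is_lim_m_infty_lt (f : R -> R) (l b : R) :
  is_lim f m_infty l -> l < b -> exists N, forall t, t <= N -> f t < b.
Proof.
  intros Hf Hlb. destruct (Hf _ (open_lt b l Hlb)) as [M HM].
  exists (M - 1). intros t Ht. apply HM. lra.
Qed.

Lemma is_lim_m_infty_gt (f : R -> R) (l b : R) :
  is_lim f m_infty l -> b < l -> exists N, forall t, t <= N -> b < f t.
Proof.
  intros Hf Hbl. destruct (Hf _ (open_gt b l Hbl)) as [M HM].
  exists (M - 1). intros t Ht. apply HM. lra.
Qed.

Lemma is_lim_pow (f : R -> R) (x : Rbar) (l : R) (n : nat) :
  is_lim f x l -> is_lim (fun t => f t ^ n) x (l ^ n).
Proof.
  intro Hf. apply (is_lim_comp_continuous f (fun y => y ^ n)); [exact Hf |].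
  apply (ex_derive_continuous (K := R_AbsRing) (V := R_NormedModule)). auto_derive. exact I.
Qed.

Lemma one_lt_sq_add_mul_above_root (lam L : R) :
  (sqrt (lam ^ 2 + 4) - lam) / 2 < L -> 1 < L ^ 2 + lam * L.
Proof.
  intro HL.
  pose proof (sqrt_pos (lam ^ 2 + 4)).
  pose proof (sqrt_sqrt (lam ^ 2 + 4) ltac:(nra)).
  assert (Habs : Rabs lam < sqrt (lam ^ 2 + 4)).
  { rewrite <- sqrt_Rsqr_abs. apply sqrt_lt_1_alt. split; [apply Rle_0_sqr | unfold Rsqr; nra]. }
  pose proof (Rle_abs (- lam)). rewrite Rabs_Ropp in *.
  nra.
Qed.

Section FirstZeroOfSeparatrix.

Variables (alpha lam beta L K th0 x0 ts : R) (x th u : R -> R).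

Hypothesis alpha_pos : 0 < alpha.
Hypothesis lam_nonneg : 0 <= lam.
Hypothesis beta_pos : 0 < beta.
Hypothesis L_pos : 0 < L.
Hypothesis L_above_root : 1 < L ^ 2 + lam * L.
Hypothesis K_def : K * (alpha + 2 * L) = beta * L.
Hypothesis K_lt_1 : K < 1.
Hypothesis th0_pos : 0 < th0.
Hypothesis x0_pos : 0 < x0.
Hypothesis x0_level : th0 ^ 2 + x0 ^ 2 - (1 - K) / 2 * x0 ^ 4 = 0.
Hypothesis lam_large : 4 * ((1 + beta / 2) * x0 ^ 2 - 1) < lam ^ 2.
Hypothesis sol : is_solution alpha lam beta x th u.
Hypothesis to_origin : tends_to_origin_at_minus_infty x th u.
Hypothesis x_ts : x ts = 0.
Hypothesis x_pos_before_ts : forall t, t < ts -> 0 < x t.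

Lemma is_derive_x t : is_derive x t (th t). Proof. apply sol. Qed.
Lemma is_derive_th t : is_derive th t (- lam * th t - x t * u t + x t - x t ^ 3).
Proof. apply sol. Qed.
Lemma is_derive_u t : is_derive u t (- alpha * u t - beta * x t * th t). Proof. apply sol. Qed.

Lemma Derive_x t : Derive (fun r : R => x r) t = th t.
Proof. apply is_derive_unique, is_derive_x. Qed.
Lemma Derive_th t : Derive (fun r : R => th r) t = - lam * th t - x t * u t + x t - x t ^ 3.
Proof. apply is_derive_unique, is_derive_th. Qed.
Lemma Derive_u t : Derive (fun r : R => u r) t = - alpha * u t - beta * x t * th t.
Proof. apply is_derive_unique, is_derive_u. Qed.

Local Ltac ex_derive_solution :=
  repeat match goal with
  | |- _ /\ _ => split
  | |- True => exact I
  | |- ex_derive (fun r => x r) ?t => exists (th t); apply is_derive_x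
  | |- ex_derive (fun r => th r) ?t => eexists; apply is_derive_th
  | |- ex_derive (fun r => u r) ?t => eexists; apply is_derive_u
  end.

Local Ltac derive_along_solution :=
  auto_derive; [ex_derive_solution | rewrite ?Derive_x, ?Derive_th, ?Derive_u].

Local Ltac continuity_along_solution :=
  apply (ex_derive_continuous (K := R_AbsRing) (V := R_NormedModule));
  auto_derive; ex_derive_solution.

Lemma lim_x : is_lim x m_infty 0. Proof. apply to_origin. Qed.
Lemma lim_th : is_lim th m_infty 0. Proof. apply to_origin. Qed.
Lemma lim_u : is_lim u m_infty 0. Proof. apply to_origin. Qed.

Lemma x_nonneg t : t <= ts -> 0 <= x t.
Proof.
  intro Ht. destruct (Req_dec t ts) as [-> | Hne]; [lra |].
  apply Rlt_le, x_pos_before_ts. lra.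
Qed.

Lemma is_derive_L_x_sub_th t :
  is_derive (fun r => L * x r - th r) t
    (- (lam + L) * (L * x t - th t) + x t * (L ^ 2 + lam * L - 1 + u t + x t ^ 2)).
Proof. derive_along_solution. ring. Qed.

Lemma is_derive_u_add_K_x2 t :
  is_derive (fun r => u r + K * x r ^ 2) t
    (- alpha * (u t + K * x t ^ 2) + (alpha * K * x t ^ 2 + (2 * K - beta) * x t * th t)).
Proof. derive_along_solution. ring. Qed.

Lemma th_le_L_x c :
  c <= ts -> (forall t, t <= c -> 0 <= L ^ 2 + lam * L - 1 + u t + x t ^ 2) ->
  th c <= L * x c.
Proof.
  intros Hc Hforcing.
  enough (0 <= L * x c - th c) by lra.
  apply (nonneg_of_nonneg_forcing (fun r => L * x r - th r)
           (fun r => x r * (L ^ 2 + lam * L - 1 + u r + x r ^ 2)) (lam + L) 0 c).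
  - lra.
  - lra.
  - replace (Finite 0) with (Finite (L * 0 - 0)) by (f_equal; ring).
    apply is_lim_minus'; [apply (is_lim_scal_l x L m_infty 0), lim_x | apply lim_th].
  - intros t _. apply is_derive_L_x_sub_th.
  - intros t Ht. apply Rmult_le_pos; [apply x_nonneg; lra | apply Hforcing, Ht].
Qed.

Lemma u_add_K_x2_nonneg c :
  c <= ts -> (forall t, t <= c -> th t <= L * x t) -> 0 <= u c + K * x c ^ 2.
Proof.
  intros Hc Hth.
  assert (HK_pos : 0 < K).
  { apply (Rmult_lt_reg_r (alpha + 2 * L)); [lra |]. rewrite K_def. nra. }
  assert (HK_beta : alpha * K + (2 * K - beta) * L = 0) by lra.
  apply (nonneg_of_nonneg_forcing (fun r => u r + K * x r ^ 2)
           (fun r => alpha * K * x r ^ 2 + (2 * K - beta) * x r * th r) alpha 0 c).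
  - lra.
  - lra.
  - replace (Finite 0) with (Finite (0 + K * 0 ^ 2)) by (f_equal; ring).
    apply is_lim_plus'; [apply lim_u |].
    apply (is_lim_scal_l _ K m_infty (0 ^ 2)), is_lim_pow, lim_x.
  - intros t _. apply is_derive_u_add_K_x2.
  - (* K is chosen so that the forcing is at least x^2 (alpha K + (2 K - beta) L) = 0 *)
    intros t Ht. pose proof (x_nonneg t ltac:(lra)). specialize (Hth t Ht).
    assert (Hxth : x t * th t <= L * x t ^ 2) by nra.
    assert (H2K : 2 * K - beta < 0) by nra.
    assert ((2 * K - beta) * (L * x t ^ 2) <= (2 * K - beta) * (x t * th t))
      by (apply Rmult_le_compat_neg_l; lra).
    assert (alpha * K * x t ^ 2 + (2 * K - beta) * (L * x t ^ 2) = 0)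
      by (rewrite <- Rmult_assoc; nra).
    lra.
Qed.

Lemma forcing_L_x_sub_th_pos t : t <= ts -> 0 < L ^ 2 + lam * L - 1 + u t + x t ^ 2.
Proof.
  intro Ht.
  enough (- (L ^ 2 + lam * L - 1 + u t + x t ^ 2) < 0) by lra.
  revert t Ht. apply neg_before_of_no_first_zero.
  - intros t _. continuity_along_solution.
  - destruct (is_lim_m_infty_gt u 0 (1 - L ^ 2 - lam * L) lim_u ltac:(lra)) as [N HN].
    exists N. intros t Ht. specialize (HN t Ht). pose proof (pow2_ge_0 (x t)). lra.
  - intros c Hc Hzero Hbefore.
    assert (Hnonneg : forall t, t <= c -> 0 <= L ^ 2 + lam * L - 1 + u t + x t ^ 2).
    { intros t Ht. destruct (Req_dec t c) as [-> | Hne]; [lra |].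
      specialize (Hbefore t ltac:(lra)). lra. }
    pose proof (u_add_K_x2_nonneg c Hc
                  (fun t Ht => th_le_L_x t ltac:(lra) (fun s Hs => Hnonneg s ltac:(lra)))).
    pose proof (pow2_ge_0 (x c)). nra.
Qed.

Lemma th_le_L_x_before_ts t : t <= ts -> th t <= L * x t.
Proof.
  intro Ht. apply th_le_L_x; [exact Ht |].
  intros s Hs. apply Rlt_le, forcing_L_x_sub_th_pos. lra.
Qed.

Lemma u_add_K_x2_nonneg_before_ts t : t <= ts -> 0 <= u t + K * x t ^ 2.
Proof.
  intro Ht. apply u_add_K_x2_nonneg; [exact Ht |].
  intros s Hs. apply th_le_L_x_before_ts. lra.
Qed.

Definition energy t := th t ^ 2 - x t ^ 2 + (1 - K) / 2 * x t ^ 4.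

Lemma is_derive_energy t :
  is_derive energy t (- 2 * lam * th t ^ 2 - 2 * x t * th t * (u t + K * x t ^ 2)).
Proof. unfold energy. derive_along_solution. field. Qed.

Lemma lim_energy : is_lim energy m_infty 0.
Proof.
  replace (Finite 0) with (Finite (0 ^ 2 - 0 ^ 2 + (1 - K) / 2 * 0 ^ 4)) by (f_equal; ring).
  apply is_lim_plus'.
  - apply is_lim_minus'; apply is_lim_pow; [apply lim_th | apply lim_x].
  - apply (is_lim_scal_l _ ((1 - K) / 2) m_infty (0 ^ 4)), is_lim_pow, lim_x.
Qed.

Lemma energy_nonincreasing a b :
  a <= b -> b <= ts -> (forall t, a <= t <= b -> 0 <= th t) -> energy b <= energy a.
Proof.
  intros Hab Hb Hth.
  enough (- energy a <= - energy b) by lra.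
  apply (le_of_is_derive_nonneg (fun t => - energy t)
           (fun t => 2 * lam * th t ^ 2 + 2 * x t * th t * (u t + K * x t ^ 2))).
  - exact Hab.
  - intros t _.
    replace (2 * lam * th t ^ 2 + 2 * x t * th t * (u t + K * x t ^ 2))
      with (- (- 2 * lam * th t ^ 2 - 2 * x t * th t * (u t + K * x t ^ 2))) by ring.
    exact (is_derive_opp energy t _ (is_derive_energy t)).
  - intros t Ht.
    pose proof (Hth t Ht). pose proof (x_nonneg t ltac:(lra)).
    pose proof (u_add_K_x2_nonneg_before_ts t ltac:(lra)).
    assert (0 <= x t * th t) by (apply Rmult_le_pos; lra).
    assert (0 <= lam * th t ^ 2) by (apply Rmult_le_pos; [lra | apply pow2_ge_0]).
    nra.
Qed.

Lemma level_gt_2 : 2 < (1 - K) * x0 ^ 2.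
Proof.
  apply Rnot_le_lt. intro Hle.
  assert (0 < th0 ^ 2) by (apply pow_lt; lra).
  assert (x0 ^ 2 * ((1 - K) / 2 * x0 ^ 2 - 1) <= 0)
    by (apply Rmult_le_0_l; [apply pow2_ge_0 | lra]).
  lra.
Qed.

Lemma energy_lt_level_at_rest t : th t = 0 -> 0 <= x t < x0 -> energy t < th0 ^ 2.
Proof.
  intros Hth Hx. pose proof level_gt_2.
  assert (Hfactor : energy t - th0 ^ 2
                    = (x t ^ 2 - x0 ^ 2) * ((1 - K) / 2 * (x t ^ 2 + x0 ^ 2) - 1)).
  { replace (th0 ^ 2) with ((1 - K) / 2 * x0 ^ 4 - x0 ^ 2) by lra.
    unfold energy. rewrite Hth. ring. }
  assert (x t ^ 2 < x0 ^ 2) by nra.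
  assert (0 < (1 - K) / 2 * (x t ^ 2 + x0 ^ 2) - 1) by nra.
  nra.
Qed.

Lemma energy_ge_level_at_x0 t : x t = x0 -> th0 ^ 2 <= energy t.
Proof. intro Hx. unfold energy. rewrite Hx. pose proof (pow2_ge_0 (th t)). lra. Qed.

Lemma low_energy_start_of_th_nonneg_arc b :
  b <= ts -> 0 <= th b -> (forall t, t <= b -> x t < x0) ->
  exists a, a <= b /\ (forall t, a <= t <= b -> 0 <= th t) /\ energy a < th0 ^ 2.
Proof.
  intros Hb Hthb Hx.
  destruct (nonneg_since_last_zero th b) as [Hall | [a [Ha [Htha Hnn]]]].
  - intros t _. continuity_along_solution.
  - exact Hthb.
  - destruct (is_lim_m_infty_lt energy 0 (th0 ^ 2) lim_energy ltac:(apply pow_lt; lra))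
      as [N HN].
    exists (Rmin N b). split; [apply Rmin_r | split].
    + intros t Ht. apply Hall. lra.
    + apply HN, Rmin_l.
  - exists a. split; [exact Ha | split; [exact Hnn |]].
    apply energy_lt_level_at_rest; [exact Htha |].
    split; [apply x_nonneg; lra | apply Hx, Ha].
Qed.

Lemma x_lt_x0 t : t <= ts -> x t < x0.
Proof.
  intro Ht. enough (x t - x0 < 0) by lra.
  revert t Ht. apply (neg_before_of_no_first_zero (fun t => x t - x0)).
  - intros t _. continuity_along_solution.
  - destruct (is_lim_m_infty_lt x 0 x0 lim_x x0_pos) as [N HN].
    exists N. intros t Ht. specialize (HN t Ht). lra.
  - intros c Hc Hxc Hbefore.
    assert (Hxc0 : x c = x0) by lra.
    assert (Hthc : 0 <= th c).
    { apply (derive_nonneg_of_lt_left x c); [apply is_derive_x |].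
      intros s Hs. specialize (Hbefore s Hs). lra. }
    (* since (1 - K) x0^2 > 2, the restoring force x - x^3 beats x u >= - K x^3 *)
    assert (Hdth : - lam * th c - x c * u c + x c - x c ^ 3 < 0).
    { pose proof (u_add_K_x2_nonneg_before_ts c Hc) as Hw. rewrite Hxc0 in *.
      pose proof level_gt_2.
      assert (- x0 * u c <= K * x0 ^ 3) by nra.
      assert (0 <= lam * th c) by (apply Rmult_le_pos; lra).
      nra. }
    destruct (pos_left_of_derive_neg th c _ (is_derive_th c) Hdth Hthc) as [b [Hbc Hpos]].
    destruct (low_energy_start_of_th_nonneg_arc b) as [a [Hab [Hnn Hlow]]].
    + lra.
    + apply Rlt_le, Hpos. lra.
    + intros s Hs. specialize (Hbefore s ltac:(lra)). lra.
    + assert (energy c <= energy a).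
      { apply energy_nonincreasing; [lra | exact Hc |]. intros r Hr.
        destruct (Rle_or_lt r b) as [Hrb | Hrb]; [apply Hnn; lra |].
        destruct (Req_dec r c) as [-> | Hrc]; [exact Hthc | apply Rlt_le, Hpos; lra]. }
      pose proof (energy_ge_level_at_x0 c Hxc0). lra.
Qed.

Lemma is_derive_half_beta_gap t :
  is_derive (fun r => beta / 2 * x0 ^ 2 - u r - beta / 2 * x r ^ 2) t
    (- alpha * (beta / 2 * x0 ^ 2 - u t - beta / 2 * x t ^ 2)
     + alpha * beta / 2 * (x0 ^ 2 - x t ^ 2)).
Proof. derive_along_solution. field. Qed.

Lemma u_add_half_beta_x2_le t : t <= ts -> u t + beta / 2 * x t ^ 2 <= beta / 2 * x0 ^ 2.
Proof.
  intro Ht.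
  enough (0 <= beta / 2 * x0 ^ 2 - u t - beta / 2 * x t ^ 2) by lra.
  apply (nonneg_of_nonneg_forcing (fun r => beta / 2 * x0 ^ 2 - u r - beta / 2 * x r ^ 2)
           (fun r => alpha * beta / 2 * (x0 ^ 2 - x r ^ 2)) alpha (beta / 2 * x0 ^ 2) t).
  - lra.
  - apply Rmult_le_pos; [lra | apply pow2_ge_0].
  - replace (Finite (beta / 2 * x0 ^ 2))
      with (Finite (beta / 2 * x0 ^ 2 - 0 - beta / 2 * 0 ^ 2)) by (f_equal; ring).
    apply is_lim_minus'; [apply is_lim_minus'; [apply is_lim_const | apply lim_u] |].
    apply (is_lim_scal_l _ (beta / 2) m_infty (0 ^ 2)), is_lim_pow, lim_x.
  - intros s _. apply is_derive_half_beta_gap.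
  - intros s Hs. pose proof (x_nonneg s ltac:(lra)). pose proof (x_lt_x0 s ltac:(lra)).
    assert (0 <= x0 ^ 2 - x s ^ 2) by nra.
    assert (0 < alpha * beta) by (apply Rmult_lt_0_compat; lra).
    apply Rmult_le_pos; lra.
Qed.

Lemma is_derive_th_add_half_lam_x t :
  is_derive (fun r => th r + lam / 2 * x r) t
    (- (lam / 2) * (th t + lam / 2 * x t) + x t * (lam ^ 2 / 4 + 1 - x t ^ 2 - u t)).
Proof. derive_along_solution. field. Qed.

Lemma exists_th_pos_before_ts : exists xi, xi < ts /\ 0 < th xi.
Proof.
  destruct (is_lim_m_infty_lt x 0 (x (ts - 1)) lim_x (x_pos_before_ts (ts - 1) ltac:(lra)))
    as [N HN].
  set (s := Rmin N (ts - 2)).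
  assert (HsN : s <= N) by apply Rmin_l.
  assert (Hs : s < ts - 1) by (pose proof (Rmin_r N (ts - 2)); unfold s in *; lra).
  destruct (MVT_cor2 x th s (ts - 1)) as [xi [Hmvt Hxi]].
  - exact Hs.
  - intros r _. apply is_derive_Reals, is_derive_x.
  - exists xi. split; [lra |]. specialize (HN s HsN). nra.
Qed.

Lemma th_pos_at_ts : 0 < th ts.
Proof.
  destruct exists_th_pos_before_ts as [xi [Hxi Hthxi]].
  pose proof (exp_weighted_le (fun r => th r + lam / 2 * x r)
                (fun r => x r * (lam ^ 2 / 4 + 1 - x r ^ 2 - u r)) (lam / 2) xi ts
                (Rlt_le _ _ Hxi) (fun r _ => is_derive_th_add_half_lam_x r)) as Hmono.
  assert (Hforcing : forall r, xi <= r <= ts -> 0 <= x r * (lam ^ 2 / 4 + 1 - x r ^ 2 - u r)).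
  { intros r Hr. pose proof (x_nonneg r ltac:(lra)). pose proof (x_lt_x0 r ltac:(lra)).
    pose proof (u_add_half_beta_x2_le r ltac:(lra)).
    assert (x r ^ 2 <= x0 ^ 2) by nra.
    assert (0 <= beta / 2 * x r ^ 2) by (apply Rmult_le_pos; [lra | apply pow2_ge_0]).
    apply Rmult_le_pos; lra. }
  specialize (Hmono Hforcing). simpl in Hmono. rewrite x_ts in Hmono.
  pose proof (exp_pos (lam / 2 * xi)). pose proof (exp_pos (lam / 2 * ts)).
  pose proof (x_nonneg xi ltac:(lra)).
  assert (0 < exp (lam / 2 * xi) * (th xi + lam / 2 * x xi))
    by (apply Rmult_lt_0_compat; [lra | nra]).
  nra.
Qed.

Lemma th_nonpos_at_ts : th ts <= 0.
Proof.
  enough (0 <= - th ts) by lra.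
  apply (derive_nonneg_of_lt_left (fun r => - x r) ts).
  - exact (is_derive_opp x ts _ (is_derive_x ts)).
  - intros t Ht. rewrite x_ts. specialize (x_pos_before_ts t Ht). lra.
Qed.

Lemma separatrix_has_no_first_zero : False.
Proof. pose proof th_pos_at_ts. pose proof th_nonpos_at_ts. lra. Qed.

End FirstZeroOfSeparatrix.

Theorem lemma3 (alpha lam beta L th0 x0 : R) (x th u : R -> R) :
  alpha > 0 -> lam >= 0 -> beta > 0 ->
  alpha * (sqrt (lam ^ 2 + 4) + lam) > 2 * (beta - 2) ->
  L > 0 -> L > (sqrt (lam ^ 2 + 4) - lam) / 2 ->
  beta * L / (alpha + 2 * L) < 1 ->
  th0 > 0 ->
  x0 > 0 ->
  th0 ^ 2 + x0 ^ 2 - (1 - beta * L / (alpha + 2 * L)) / 2 * x0 ^ 4 = 0 ->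
  lam ^ 2 > 4 * ((1 + beta / 2) * x0 ^ 2 - 1) ->
  positive_separatrix alpha lam beta x th u ->
  forall t : R, x t > 0.
Proof.
  intros Halpha Hlam Hbeta _ HL Hroot HK Hth0 Hx0 Hlevel Hlam_large
    [Hsol [Horigin [_ [t1 Ht1]]]] t.
  assert (HK_def : beta * L / (alpha + 2 * L) * (alpha + 2 * L) = beta * L) by (field; lra).
  enough (- x t < 0) by lra.
  apply (neg_before_of_no_first_zero (fun r => - x r) t); [| | | lra].
  - intros r _. apply (ex_derive_continuous (K := R_AbsRing) (V := R_NormedModule)).
    exists (- th r). exact (is_derive_opp x r _ (proj1 (Hsol r))).
  - exists t1. intros r Hr. specialize (Ht1 r Hr). lra.
  - intros c _ Hc Hbefore.
    apply (separatrix_has_no_first_zero alpha lam beta L (beta * L / (alpha + 2 * L))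
             th0 x0 c x th u);
      try assumption; try lra.
    + apply one_lt_sq_add_mul_above_root. lra.
    + intros r Hr. specialize (Hbefore r Hr). lra.
Qed.
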